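(* Let $p$ be an odd prime and $d\ge 3$ an integer with $p\nmid d$ and $d\not\equiv 1 \pmod p$. Let $f(x)=x^d+F(x)$ and $f'(x)=x^d+F'(x)$, where $F,F'\in\overline{\mathbb{F}}_p[x]$ are each either $0$ or of degree at most $d-2$, and no monomial appearing in $F$ or $F'$ has an exponent divisible by $p$ (in particular there is no constant term). Suppose $(M,\lambda,h)$ transforms $C_f$ into $C_{f'}$. Then, after normalizing $M$ so that $M(x)=\alpha x+\beta$ (which is possible since $M$ must fix $\infty$), one has $\beta=0$, $\lambda=\alpha^d$ (so $\alpha^{d(p-1)}=1$), and $h$ is a constant lying in $\mathbb{F}_p$. In other words, up to composition with an automorphism $(x,y)\mapsto(x,y+c)$, $c\in\mathbb{F}_p$, the isomorphism is $(x,y)\mapsto(\alpha x,\alpha^d y)$.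
   Context: Let $p$ be an odd prime. For $f\in\overline{\mathbb{F}}_p(x)$ not of the form $z^p-z$ with $z\in\overline{\mathbb{F}}_p(x)$, $C_f$ denotes the Artin–Schreier curve $y^p-y=f(x)$ over $\overline{\mathbb{F}}_p$. For a Möbius transformation $M(x)=\frac{\alpha x+\beta}{\gamma x+\delta}$ ($\alpha,\beta,\gamma,\delta\in\overline{\mathbb{F}}_p$, $\alpha\delta-\beta\gamma\neq0$), $\lambda\in\mathbb{F}_p^\times$ and $h\in\overline{\mathbb{F}}_p(x)$, we say that $(M,\lambda,h)$ transforms $C_f$ into $C_{f'}$ if $f(M(x))=\lambda f'(x)+h(x)^p-h(x)$; equivalently, substituting $x\mapsto M(x)$, $y\mapsto \lambda y+h(x)$ into the equation of $C_f$ yields the equation of $C_{f'}$. *)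

From HB Require Import structures.
From mathcomp Require Import all_boot all_order all_algebra.
Set Implicit Arguments. Unset Strict Implicit. Unset Printing Implicit Defensive.
Import GRing.Theory.
Local Open Scope ring_scope.

Notation ratfun K := {fraction {poly K}}.

Definition polyF (K : fieldType) (q : {poly K}) : ratfun K := FracField.tofrac q.

Definition constF (K : fieldType) (c : K) : ratfun K := polyF c%:P.

Definition mobius (K : fieldType) (a b c e : K) : ratfun K :=
  polyF (a *: 'X + b%:P) / polyF (c *: 'X + e%:P).

Definition compF (K : fieldType) (f : {poly K}) (m : ratfun K) : ratfun K :=
  (map_poly (@constF K) f).[m].

(* (M, lambda, h) transforms C_f into C_f' :  f(M(x)) = lambda f'(x) + h^p - h,
   where M = (a x + b)/(c x + e) with a e - b c <> 0 and lambda in F_p^x. *)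
Definition transforms (K : fieldType) (p : nat) (a b c e lam : K) (h : ratfun K)
    (f f' : {poly K}) : Prop :=
  [/\ a * e - b * c != 0, lam != 0, lam ^+ p = lam &
      compF f (mobius a b c e) = constF lam * polyF f' + h ^+ p - h].

From HB Require Import structures.
From mathcomp Require Import all_boot all_order all_algebra.
From mathcomp Require Import ring zify.

(* If c != 0, then f(M(x)) has a pole of exact order d at x = -e/c, whereas every
   pole of lam f'(x) + h^p - h has order divisible by p; as p does not divide d,
   M is affine, M(x) = al x + be.  Then G := f(al x + be) - lam f'(x) is a polynomial
   equal to h^p - h, which forces h to be a polynomial H (a pole of h would be a pole
   of h^p - h).  If H is not constant, deg G = p deg H is divisible by p, hence
   differs from d and from d - 1 (d is not 0 or 1 mod p), so deg G < d - 1 and the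
   coefficient d al^(d-1) be of x^(d-1) in G vanishes.  Then be = 0, and G has no
   monomial of exponent divisible by p, contradicting its leading term.  So H is a
   constant c, c^p = c, and the coefficients of x^d and x^(d-1) give lam = al^d and
   be = 0. *)

Set Implicit Arguments.
Unset Strict Implicit.
Unset Printing Implicit Defensive.

Import GRing.Theory.
Local Open Scope ring_scope.

Section RationalFunctions.
Variable K : fieldType.
Implicit Types (f g u v A B : {poly K}) (h : ratfun K).

Lemma polyF_inj : injective (@polyF K).
Proof. by move=> u v /eqP; rewrite tofrac_eq => /eqP. Qed.

Lemma polyF_eq0 u : (polyF u == 0) = (u == 0).
Proof. exact: tofrac_eq0. Qed.

Lemma constF_mulF c u : constF c * polyF u = polyF (c *: u).
Proof. by rewrite /constF /polyF -tofracM mul_polyC. Qed.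

Lemma compF_polyF f u : compF f (polyF u) = polyF (f \Po u).
Proof.
by rewrite /compF /polyF /comp_poly -horner_map -map_poly_comp.
Qed.

Lemma ratfun_coprime_frac h :
  exists u v, [/\ v != 0, coprimep u v & h = polyF u / polyF v].
Proof.
have [n [d [d0 ->]]] : exists n d, d != 0 /\ h = polyF n / polyF d.
  elim/quotW: h => r; exists (\n_r), (\d_r); split; first exact: denom_ratioP.
  rewrite /polyF; unlock FracField.tofrac.
  rewrite -[_^-1]/(FracField.inv _) -[_ * _]/(FracField.mul _ _).
  rewrite -!FracField.pi_inv -!FracField.pi_mul; apply/eqmodP => /=.
  rewrite FracField.equivfE /FracField.invf /FracField.mulf.
  rewrite !numden_Ratio ?oner_neq0 ?denom_ratioP ?mulr1 ?mul1r //.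
  - by rewrite mulrC.
  - exact: denom_ratioP.
  - exact: denom_ratioP.
set g := gcdp n d; have g0 : g != 0 by rewrite gcdp_eq0 negb_and d0 orbT.
have [en ed] : n %/ g * g = n /\ d %/ g * g = d by rewrite !divpK ?dvdp_gcdl ?dvdp_gcdr.
exists (n %/ g), (d %/ g); split.
- by apply: contraNneq d0 => e0; rewrite -ed e0 mul0r.
- by rewrite coprimep_div_gcd // d0 orbT.
rewrite -[in LHS]en -[in LHS]ed /polyF !tofracM invfM mulrACA divff ?mulr1 //.
by rewrite tofrac_eq0.
Qed.

Lemma compF_frac_homog f A B d : B != 0 -> (size f <= d.+1)%N ->
  compF f (polyF A / polyF B) * polyF B ^+ d =
  polyF (\sum_(i < d.+1) f`_i *: (A ^+ i * B ^+ (d - i))).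
Proof.
move=> B0 sf; have BF0 : polyF B != 0 by rewrite polyF_eq0.
rewrite /compF (horner_coef_wide _ (n := d.+1)); last first.
  by rewrite /map_poly (leq_trans (size_poly _ _)).
rewrite mulr_suml /polyF rmorph_sum; apply: eq_bigr => i _.
rewrite coef_map_id0 ?rmorph0 // -mul_polyC !rmorphM !rmorphXn /= expr_div_n.
have -> : polyF B ^+ d = polyF B ^+ i * polyF B ^+ (d - i).
  by rewrite -exprD subnKC // -ltnS.
by rewrite -mulrA (mulrA (_ / _)) divfK ?expf_neq0 // mulrA.
Qed.

End RationalFunctions.

Lemma mupX (K : fieldType) (r : K) (v : {poly K}) n :
  v != 0 -> mup r (v ^+ n) = (n * mup r v)%N.
Proof.
move=> v0; elim: n => [|n IHn]; first by rewrite expr0 mupNroot ?root1.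
by rewrite exprS mupM ?expf_neq0 // IHn mulSn.
Qed.

Section ArtinSchreier.
Variables (K : fieldType) (p : nat).
Hypothesis p_gt1 : (1 < p)%N.
Implicit Types (g u v P D : {poly K}) (h : ratfun K).

Lemma AS_frac u v : v != 0 ->
  (polyF u / polyF v) ^+ p - polyF u / polyF v =
  polyF (u ^+ p - u * v ^+ p.-1) / polyF (v ^+ p).
Proof.
move=> v0; have vF0 : polyF v != 0 by rewrite polyF_eq0.
rewrite /polyF !(tofracB, tofracM, tofracXn) expr_div_n mulrBl; congr (_ - _).
have -> : FracField.tofrac v ^+ p =
          FracField.tofrac v ^+ p.-1 * FracField.tofrac v.
  by rewrite -exprSr prednK // ltnW.
by rewrite invfM mulrA mulfK ?expf_neq0.
Qed.

Lemma AS_numer_rootN u v r : coprimep u v -> root v r ->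
  ~~ root (u ^+ p - u * v ^+ p.-1) r.
Proof.
move=> cuv /rootP vr; rewrite /root !hornerE vr expr0n -subn1 subn_eq0.
rewrite leqNgt p_gt1 mulr0 subr0 expf_eq0 negb_and orbC.
by rewrite coprimep_sym in cuv; rewrite (coprimep_root cuv) //; apply/rootP.
Qed.

Lemma AS_clear_denom P D g u v : D != 0 -> v != 0 ->
  polyF P / polyF D = polyF g + (polyF u / polyF v) ^+ p - polyF u / polyF v ->
  P * v ^+ p = D * (g * v ^+ p + (u ^+ p - u * v ^+ p.-1)).
Proof.
move=> D0 v0; rewrite -addrA AS_frac //; set N := u ^+ p - _ => eqPD.
have DF0 : polyF D != 0 by rewrite polyF_eq0.
have VF0 : polyF (v ^+ p) != 0 by rewrite polyF_eq0 expf_neq0.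
apply: polyF_inj; rewrite /polyF in eqPD DF0 VF0 *.
rewrite !tofracM tofracD tofracM -[FracField.tofrac P](divfK DF0) eqPD.
by rewrite mulrAC mulrDl divfK // mulrC.
Qed.

Lemma AS_pole_mup_dvdn P D g h r : D != 0 -> ~~ root P r ->
  polyF P / polyF D = polyF g + h ^+ p - h -> (p %| mup r D)%N.
Proof.
move=> D0 PrN; have [u [v [v0 cuv ->]]] := ratfun_coprime_frac h.
move/(AS_clear_denom D0 v0); set Q := _ + _ => eqPQ.
have P0 : P != 0 by apply: contraNneq PrN => ->; rewrite root0.
have Q0 : Q != 0.
  apply: contraNneq (mulf_neq0 P0 (expf_neq0 p v0)) => Q0.
  by rewrite eqPQ Q0 mulr0.
have [vr | vrN] := boolP (root v r); last first.
  rewrite mupNroot ?dvdn0 //; apply: contra vrN => Dr.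
  have : root (P * v ^+ p) r by rewrite eqPQ rootM Dr.
  by rewrite rootM (negPf PrN) (root_exp (mulrC _ _) (ltnW p_gt1)).
have QrN : ~~ root Q r.
  have gv0 : (g * v ^+ p).[r] = 0.
    by rewrite hornerM horner_exp (rootP vr) expr0n (gtn_eqF (ltnW p_gt1)) mulr0.
  by rewrite /root /Q hornerD gv0 add0r; apply: AS_numer_rootN.
have := congr1 (mup r) eqPQ.
rewrite (mupMr _ PrN) (mupMl _ QrN) (mupX _ _ v0) => <-.
exact: dvdn_mulr (dvdnn p).
Qed.

End ArtinSchreier.

Lemma AS_preimage_polyF (K : closedFieldType) p (g : {poly K}) (h : ratfun K) :
  (1 < p)%N -> polyF g = h ^+ p - h -> exists H, h = polyF H.
Proof.
move=> p_gt1 eqg; have [u [v [v0 cuv eh]]] := ratfun_coprime_frac h.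
have [/size_poly1P [c c0 ev] | /closed_rootP [r vr]] := boolP (size v == 1).
  exists (c^-1 *: u); rewrite eh ev /polyF -mul_polyC rmorphM mulrC; congr (_ * _).
  by apply: mulr1_eq; rewrite -rmorphM -polyCM divff // rmorph1.
have := @AS_clear_denom _ _ p_gt1 g 1 0 u v (oner_neq0 _) v0.
rewrite /polyF tofrac1 tofrac0 divr1 add0r mul0r add0r mul1r -/(polyF _) eqg eh.
move=> /(_ erefl) /(congr1 (horner^~ r)) /esym /eqP.
rewrite hornerM horner_exp (rootP vr) expr0n (gtn_eqF (ltnW p_gt1)) mulr0.
by move=> Nr; case/negP: (AS_numer_rootN p_gt1 cuv vr).
Qed.

Section ASPolynomial.
Variables (R : idomainType) (p : nat) (H : {poly R}).
Hypotheses (p_gt1 : (1 < p)%N) (sH : (1 < size H)%N).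

Let H0 : H != 0. Proof. by rewrite -size_poly_gt0 ltnW. Qed.

Let size_Hp : size (H ^+ p) = ((size H).-1 * p).+1.
Proof. by rewrite -size_exp prednK // size_poly_gt0 expf_neq0. Qed.

Let size_exp_gt : (size H < size (H ^+ p))%N.
Proof. by rewrite size_Hp; case: (size H) sH => // -[|s] //= _; nia. Qed.

Lemma size_AS_poly : size (H ^+ p - H) = ((size H).-1 * p).+1.
Proof. by rewrite size_polyDl ?size_polyN. Qed.

Lemma lead_coef_AS_poly : lead_coef (H ^+ p - H) = lead_coef H ^+ p.
Proof. by rewrite lead_coefDl ?lead_coef_exp // size_polyN size_exp_gt. Qed.

End ASPolynomial.

(* In the application, the vanishing of the x^(d-1) coefficient of G forces be = 0,
   which in turn kills every coefficient of G at a multiple of p. *)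
Lemma AS_poly_size_le1 (R : idomainType) p d (G H : {poly R}) :
  (1 < p)%N -> ~~ (p %| d)%N -> (d %% p != 1)%N -> (size G <= d.+1)%N ->
  (G`_d.-1 = 0 -> forall j, (p %| j)%N -> G`_j = 0) ->
  G = H ^+ p - H -> (size H <= 1)%N.
Proof.
move=> p_gt1 pNd dNp1 sG G_p eG; rewrite leqNgt; apply/negP => sH.
set n := ((size H).-1 * p)%N.
have sGn : size G = n.+1 by rewrite eG size_AS_poly.
have Gn0 : G`_n != 0.
  rewrite -[n]/(n.+1.-1) -sGn -lead_coefE eG lead_coef_AS_poly //.
  by rewrite expf_neq0 // lead_coef_eq0 -size_poly_gt0 ltnW.
have p_n : (p %| n)%N by rewrite dvdn_mull.
have nNd : n != d by apply: contraNneq pNd => <-.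
have nSNd : n.+1 != d.
  apply: contraNneq dNp1 => <-.
  by rewrite -addn1 -modnDml (eqP p_n) add0n modn_small.
have : G`_d.-1 = 0 by rewrite nth_default // sGn; lia.
by move=> /G_p /(_ n p_n) Gn; rewrite Gn eqxx in Gn0.
Qed.

Section LinearPowers.
Variables (R : comNzRingType) (al be : R).
Let q := al *: 'X + be%:P.

Lemma size_linear_leq : (size q <= 2)%N.
Proof.
rewrite (leq_trans (size_polyD _ _)) // geq_max (leq_trans (size_scale_leq _ _)).
  by rewrite (leq_trans (size_polyC_leq1 _)).
by rewrite size_polyX.
Qed.

Lemma coef_linear_exp n :
  (q ^+ n.+1)`_n.+1 = al ^+ n.+1 /\ (q ^+ n.+1)`_n = n.+1%:R * al ^+ n * be.
Proof.
have coefMq s k : (s * q)`_k.+1 = al * s`_k + be * s`_k.+1.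
  by rewrite mulrDr coefD -scalerAr coefZ coefMX coefMC /= [_ * be]mulrC.
elim: n => [|n [IH1 IH0]].
  rewrite expr1 !coefD !coefZ !coefC !coefX /=.
  by rewrite mulr1 mulr0 addr0 add0r mul1r expr0 mul1r.
have top0 : (q ^+ n.+1)`_n.+2 = 0.
  rewrite nth_default // (leq_trans (size_poly_exp_leq _ _)) // ltnS.
  by move: size_linear_leq; case: (size q) => [|[|[|s]]] // _; rewrite mul1n.
rewrite exprSr !coefMq top0 IH1 IH0 mulr0 addr0 -exprS; split=> //.
by rewrite mulrS exprS; ring.
Qed.
End LinearPowers.

Lemma coef_comp_scaleX (R : comNzRingType) (f : {poly R}) a j :
  (f \Po (a *: 'X))`_j = a ^+ j * f`_j.
Proof.
rewrite coef_comp_poly; under eq_bigr do rewrite exprZn coefZ coefXn.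
have [jf | fj] := ltnP j (size f); last first.
  rewrite nth_default // mulr0 big1 // => i _.
  by rewrite gtn_eqF ?mulr0 // (leq_trans (ltn_ord i) fj).
rewrite (bigD1 (Ordinal jf)) //= eqxx mulr1 big1 ?addr0 1?mulrC // => i.
by move=> ne; rewrite eq_sym (negPf (ne : val i != j)) !mulr0.
Qed.

Section AffineSubstitution.
Variables (K : fieldType) (p d : nat) (F F' : {poly K}) (al be lam : K).
Hypotheses (pcharK : p \in [pchar K]) (d_gt1 : (1 < d)%N) (pNd : ~~ (p %| d)%N).
Hypotheses (szF : (size F <= d.-1)%N) (szF' : (size F' <= d.-1)%N).
Hypotheses (F_p : forall i, (p %| i)%N -> F`_i = 0).
Hypotheses (F'_p : forall i, (p %| i)%N -> F'`_i = 0).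

Let q := al *: 'X + be%:P.
Let G := ('X^d + F) \Po q - lam *: ('X^d + F').

Let size_Fq : (size (F \Po q) <= d.-1)%N.
Proof.
apply: leq_trans (size_comp_poly_leq _ _) _.
move: (size_linear_leq al be) szF d_gt1; rewrite -/q.
by case: (size q) => [|[|[|]]] //=; lia.
Qed.

Let coef_G_high j : (d.-1 <= j)%N -> G`_j = (q ^+ d)`_j - lam * (j == d)%:R.
Proof.
move=> dj; rewrite /G comp_polyD comp_Xn_poly coefB !coefD coefZ coefD coefXn.
rewrite (nth_default _ (leq_trans size_Fq dj)).
by rewrite (nth_default _ (leq_trans szF' dj)) !addr0.
Qed.

Let size_G : (size G <= d.+1)%N.
Proof.
apply/leq_sizeP => j dj; rewrite coef_G_high; last by lia.
rewrite (gtn_eqF dj) mulr0 subr0 nth_default //.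
apply: leq_trans (size_poly_exp_leq _ _) _.
move: (size_linear_leq al be) dj; rewrite -/q.
by case: (size q) => [|[|[|]]] //=; lia.
Qed.

Let coef_q_exp : (q ^+ d)`_d = al ^+ d /\ (q ^+ d)`_d.-1 = d%:R * al ^+ d.-1 * be.
Proof. by have := coef_linear_exp al be d.-1; rewrite prednK // ltnW. Qed.

Let coef_G_top : G`_d = al ^+ d - lam.
Proof. by rewrite coef_G_high ?leq_pred // eqxx mulr1 coef_q_exp.1. Qed.

Let coef_G_pred : G`_d.-1 = d%:R * al ^+ d.-1 * be.
Proof.
rewrite coef_G_high // coef_q_exp.2 (_ : (d.-1 == d) = false) ?mulr0 ?subr0 //.
by apply/negbTE; rewrite neq_ltn ltn_predL ltnW.
Qed.

Let coef_G_dvdp : be = 0 -> forall j, (p %| j)%N -> G`_j = 0.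
Proof.
move=> be0 j pj; have jNd : (j == d) = false by apply: contraNF pNd => /eqP <-.
rewrite /G /q be0 addr0 comp_polyD comp_Xn_poly exprZn coefB !(coefD, coefZ).
rewrite coef_comp_scaleX F_p // F'_p // coefXn jNd mulr0n.
by rewrite !mulr0 !addr0 mulr0 subr0.
Qed.

Lemma AS_affine_rigid H : (d %% p != 1)%N -> al != 0 -> G = H ^+ p - H ->
  [/\ be = 0, lam = al ^+ d & exists2 c, c ^+ p = c & H = c%:P].
Proof.
move=> dNp1 al0 eGH; have p_gt1 := prime_gt1 (pcharf_prime pcharK).
have be0_of : G`_d.-1 = 0 -> be = 0.
  rewrite coef_G_pred => /eqP; rewrite !mulf_eq0 -(dvdn_pcharf pcharK) (negPf pNd).
  by rewrite expf_eq0 (negPf al0) andbF => /eqP.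
have sH : (size H <= 1)%N.
  apply: (AS_poly_size_le1 p_gt1 pNd dNp1 size_G _ eGH) => /be0_of.
  exact: coef_G_dvdp.
have eH := size1_polyC sH; set c := H`_0 in eH.
have G0 j : (0 < j)%N -> G`_j = 0.
  by rewrite eGH eH -rmorphXn -polyCB coefC; case: j.
have be0 : be = 0 by apply/be0_of/G0; rewrite -ltnS prednK // ltnW.
split=> //; first by apply/esym/eqP; rewrite -subr_eq0 -coef_G_top G0 // ltnW.
exists c => //; apply/eqP; rewrite -subr_eq0.
have := coef_G_dvdp be0 (dvdn0 p).
by rewrite eGH eH -rmorphXn -polyCB coefC /= => ->.
Qed.

End AffineSubstitution.

Section Mobius.
Variables (K : fieldType) (a b c e : K).

Lemma mobius_affine :
  e != 0 -> mobius a b 0 e = polyF ((a / e) *: 'X + (b / e)%:P).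
Proof.
move=> e0; rewrite /mobius scale0r add0r.
have -> : a *: 'X + b%:P = ((a / e) *: 'X + (b / e)%:P) * e%:P.
  by rewrite mulrC mulrDr !mul_polyC scalerA scale_polyC ![e * _]mulrC !divfK.
by rewrite /polyF tofracM mulfK // tofrac_eq0 polyC_eq0.
Qed.

Hypothesis c0 : c != 0.
Let r := - e / c.
Let B := c *: 'X + e%:P.

Let B_factor : B = c%:P * ('X - r%:P).
Proof. by rewrite mulrBr mul_polyC -polyCM /r mulrC divfK // polyCN opprK. Qed.

Lemma linear_poly_neq0 : B != 0.
Proof. by rewrite B_factor mulf_neq0 ?polyC_eq0 ?polyXsubC_eq0. Qed.

Lemma mup_linear : mup r B = 1%N.
Proof.
rewrite B_factor mupMr ?rootC //.
by have := mup_XsubCX 1 r r; rewrite expr1 eqxx.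
Qed.

Lemma compF_mobius_pole (f : {poly K}) d :
  a * e - b * c != 0 -> (size f <= d.+1)%N -> f`_d != 0 ->
  exists2 P, ~~ root P r & compF f (mobius a b c e) = polyF P / polyF (B ^+ d).
Proof.
move=> det sf fd; set A := a *: 'X + b%:P.
have B0 := linear_poly_neq0.
have Br : B.[r] = 0 by rewrite B_factor hornerM hornerXsubC subrr mulr0.
have Ar : A.[r] != 0.
  apply: contraNneq det; rewrite /A hornerD hornerZ hornerX hornerC => Ar0.
  have -> : a * e - b * c = - c * (a * r + b) by rewrite /r; field.
  by rewrite Ar0 mulr0.
exists (\sum_(i < d.+1) f`_i *: (A ^+ i * B ^+ (d - i))); last first.
  rewrite -(compF_frac_homog A B0 sf) /polyF tofracXn mulfK //.
  by rewrite expf_neq0 // tofrac_eq0.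
rewrite /root horner_sum big_ord_recr /= big1 ?add0r => [|i _]; last first.
  by rewrite hornerZ hornerM !horner_exp Br expr0n subn_eq0 leqNgt ltn_ord !mulr0.
by rewrite hornerZ hornerM !horner_exp subnn expr0 mulr1 mulf_neq0 // expf_neq0.
Qed.

End Mobius.

Lemma AS_transform_affine (K : fieldType) p d (f g : {poly K}) (a b c e : K) h :
  (1 < p)%N -> ~~ (p %| d)%N -> a * e - b * c != 0 ->
  (size f <= d.+1)%N -> f`_d != 0 ->
  compF f (mobius a b c e) = polyF g + h ^+ p - h -> c = 0.
Proof.
move=> p_gt1 pNd det sf fd; apply: contraPeq => cN0.
have [P PrN ->] := compF_mobius_pole cN0 det sf fd.
move/(AS_pole_mup_dvdn p_gt1 (expf_neq0 d (linear_poly_neq0 e cN0)) PrN).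
by rewrite mupX ?mup_linear ?linear_poly_neq0 // muln1 (negPf pNd).
Qed.

Theorem proposition4p2
  (p : nat) (K : closedFieldType)
  (hp : prime p) (hp_odd : odd p) (hchar : p \in [pchar K])
  (halg : forall x : K, exists n : nat, (0 < n)%N /\ x ^+ (p ^ n) = x)
  (d : nat) (hd3 : (3 <= d)%N) (hpd : ~~ (p %| d)%N) (hd1 : (d %% p != 1)%N)
  (F F' : {poly K})
  (hF : (size F <= d.-1)%N) (hF' : (size F' <= d.-1)%N)
  (hFp : forall i : nat, (p %| i)%N -> F`_i = 0)
  (hF'p : forall i : nat, (p %| i)%N -> F'`_i = 0)
  (a b c e lam : K) (h : ratfun K)
  (htr : transforms p a b c e lam h ('X^d + F) ('X^d + F')) :
  c = 0 /\ b = 0 /\ lam = (a / e) ^+ d /\ (a / e) ^+ (d * (p - 1)) = 1 /\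
  exists c0 : K, c0 ^+ p = c0 /\ h = constF c0.
Proof.
case: htr => det lam0 lamp; rewrite constF_mulF => eqf.
have p_gt1 := prime_gt1 hp.
have sFd : (size F <= d)%N by lia.
have c_eq0 : c = 0.
  apply: (AS_transform_affine p_gt1 hpd det _ _ eqf).
    rewrite (leq_trans (size_polyD _ _)) //.
    by rewrite geq_max size_polyXn leqnn (leqW sFd).
  by rewrite coefD coefXn eqxx (nth_default _ sFd) addr0 oner_neq0.
split=> //; subst c.
rewrite mulr0 subr0 mulf_eq0 negb_or in det; case/andP: det => a0 e0.
move: eqf; rewrite mobius_affine // compF_polyF => /eqP.
rewrite -addrA addrC -subr_eq /polyF -tofracB -/(polyF _) => /eqP eqG.
have [H eH] := AS_preimage_polyF p_gt1 eqG.
have eGH : ('X^d + F) \Po ((a / e) *: 'X + (b / e)%:P) - lam *: ('X^d + F') =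
           H ^+ p - H.
  by apply: polyF_inj; rewrite eqG eH /polyF tofracB tofracXn.
have [be0 lamE [c0 c0p eHc]] :=
  AS_affine_rigid hchar (ltnW hd3) hpd hF hF' hFp hF'p hd1
    (mulf_neq0 a0 (invr_neq0 e0)) eGH.
split; first by move/eqP: be0; rewrite mulf_eq0 invr_eq0 (negPf e0) orbF => /eqP.
split=> //; split; last by exists c0; rewrite eH eHc.
rewrite exprM -lamE; apply: (mulIf lam0).
by rewrite mul1r -exprSr subn1 prednK ?prime_gt0.
Qed.
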